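(* For every choice of parameters $\lambda>0$, $\eta\in(0,1)$, $g_l^*>0$, integers $t\ge1$ and $\mathit{Depth}_{\max}\ge 1$, and privacy budget $\varepsilon_t>0$, the algorithm TrainSingleTree described below is $\varepsilon_t$-differentially private, i.e. for all neighboring datasets $D,D'$ and every measurable set $O$ of outputs, $\Pr[\mathcal A(D)\in O]\le e^{\varepsilon_t}\Pr[\mathcal A(D')\in O]$.
   Context: A dataset is a finite collection of records $i$, each consisting of a feature vector $\mathbf x_i\in\mathbb R^d$, a label $y_i\in[-1,1]$ and a gradient $g_i\in\mathbb R$ determined by the record (e.g. $g_i=\partial l(y_i,y)/\partial y$ evaluated at the prediction of a fixed, data-independent current model). Two datasets are neighboring if one is obtained from the other by adding or removing one record. Splits of a node are chosen from a fixed finite set of candidate splits (feature index, threshold), each partitioning the node's records into a left set $I_L$ and right set $I_R$. Let $G(I_L,I_R)=\frac{(\sum_{i\in I_L}g_i)^2}{|I_L|+\lambda}+\frac{(\sum_{i\in I_R}g_i)^2}{|I_R|+\lambda}$, $V(I)=-\frac{\sum_{i\in I}g_i}{|I|+\lambda}$, $\Delta G=3{g_l^*}^2$, $\Delta V=\min\left(\frac{g_l^*}{1+\lambda},2g_l^*(1-\eta)^{t-1}\right)$. Algorithm TrainSingleTree on dataset $I$: (1) set $\varepsilon_{leaf}=\varepsilon_t/2$ and $\varepsilon_{nleaf}=\varepsilon_t/(2\mathit{Depth}_{\max})$; (2) discard all records with $|g_i|>g_l^*$; (3) starting from a root node containing all remaining records, for $depth=1,\dots,\mathit{Depth}_{\max}$,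 for each node at the current depth: for each candidate split $j$ compute $G_j=G(I_L,I_R)$ on the node's records, choose split $s$ with probability $P_s/\sum_j P_j$ where $P_j=\exp\left(\frac{\varepsilon_{nleaf}G_j}{2\Delta G}\right)$, and split the node accordingly; (4) for each resulting leaf with record set $I_\ell$, compute $V=V(I_\ell)$, clip it to $V'=V\cdot\min(1,g_l^*(1-\eta)^{t-1}/|V|)$ (with $V'=0$ if $V=0$), and release $V'+\mathrm{Lap}(0,\Delta V/\varepsilon_{leaf})$ using independent Laplace noise of mean $0$ and scale $\Delta V/\varepsilon_{leaf}$. The output is the tree structure (all chosen splits) together with the noisy leaf values. *)

From HB Require Import structures.
From mathcomp Require Import all_boot all_order all_algebra.
From mathcomp Require Import all_classical all_reals all_analysis.

Set Implicit Arguments.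
Unset Strict Implicit.
Unset Printing Implicit Defensive.

Import Order.TTheory GRing.Theory Num.Theory.
Local Open Scope ring_scope.

Section TrainSingleTree.
Variable R : realType.

(* A record is a pair (x, y) with feature vector x in R^d and label y.
   The gradient of a record is g x y, for a fixed (data-independent)
   function g : R^d -> R -> R. *)
Definition record (d : nat) := ('rV[R]_d * R)%type.

(* A dataset is a finite collection (multiset) of records, represented by
   a sequence taken up to permutation. *)
Definition neighboring (d : nat) (D D' : seq (record d)) : Prop :=
  (exists r, perm_eq D' (r :: D)) \/ (exists r, perm_eq D (r :: D')).

Definition goes_left (d : nat) (sp : 'I_d * R) (x : 'rV[R]_d) : bool :=
  x ord0 sp.1 < sp.2.

(* Tree structure of a full binary tree of depth Dmax: internal nodes are
   numbered in heap order 0 .. 2^Dmax - 2 (root 0, children of p are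
   2p+1 (left) and 2p+2 (right)); leaves are the heap nodes
   2^Dmax - 1 + j, j < 2^Dmax. *)
Definition tree_struct (Dmax m : nat) := {ffun 'I_(2 ^ Dmax).-1 -> 'I_m}.

Section Tree.
Variables (d m Dmax : nat) (spl : 'I_m -> 'I_d * R) (s : tree_struct Dmax m).

(* split chosen at internal heap node p (None if p is not internal,
   which never happens in uses below) *)
Definition split_at (p : nat) : option ('I_d * R) :=
  if insub p is Some q then Some (spl (s q)) else None.

Definition goes_left_at (p : nat) (x : 'rV[R]_d) : bool :=
  if split_at p is Some sp then goes_left sp x else true.

(* does a record with features x reach heap node i ?  (fuel-based
   recursion; fuel i suffices since the parent (i-1)/2 of i > 0 is < i) *)
Fixpoint reach_fuel (fuel : nat) (x : 'rV[R]_d) (i : nat) : bool :=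
  match fuel with
  | 0 => i == 0
  | f.+1 => if i == 0 then true
            else let p := (i.-1)./2 in
                 reach_fuel f x p && (goes_left_at p x == odd i)
  end.

Definition reach (x : 'rV[R]_d) (i : nat) : bool := reach_fuel i x i.
End Tree.

Section Algorithm.
Variables (d m Dmax t : nat) (spl : 'I_m -> 'I_d * R) (g : 'rV[R]_d -> R -> R).
Variables (lam eta gl eps : R).

Definition grad (r : record d) : R := g r.1 r.2.

Definition clipped_data (D : seq (record d)) : seq (record d) :=
  [seq r <- D | `|grad r| <= gl].

Definition sum_grad (I : seq (record d)) : R := \sum_(r <- I) grad r.

Definition gain (IL IR : seq (record d)) : R :=
  (sum_grad IL) ^+ 2 / ((size IL)%:R + lam)
  + (sum_grad IR) ^+ 2 / ((size IR)%:R + lam).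

Definition leaf_value (I : seq (record d)) : R :=
  - (sum_grad I) / ((size I)%:R + lam).

Definition DeltaG : R := 3 * gl ^+ 2.
Definition cap : R := gl * (1 - eta) ^+ t.-1.
Definition DeltaV : R := Num.min (gl / (1 + lam)) (2 * gl * (1 - eta) ^+ t.-1).
Definition eps_leaf : R := eps / 2.
Definition eps_nleaf : R := eps / (2 * Dmax%:R).

Definition split_gain (I : seq (record d)) (j : 'I_m) : R :=
  gain [seq r <- I | goes_left (spl j) r.1]
       [seq r <- I | ~~ goes_left (spl j) r.1].

Definition expw (I : seq (record d)) (j : 'I_m) : R :=
  expR (eps_nleaf * split_gain I j / (2 * DeltaG)).

Definition choose_prob (I : seq (record d)) (j : 'I_m) : R :=
  expw I j / \sum_(k < m) expw I k.

Definition node_records (D : seq (record d)) (s : tree_struct Dmax m) (i : nat)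
  : seq (record d) :=
  [seq r <- clipped_data D | reach spl s r.1 i].

Definition struct_prob (D : seq (record d)) (s : tree_struct Dmax m) : R :=
  \prod_(i : 'I_(2 ^ Dmax).-1) choose_prob (node_records D s i) (s i).

Definition clip (V : R) : R :=
  if V == 0 then 0 else V * Num.min 1 (cap / `|V|).

Definition leaf_means (D : seq (record d)) (s : tree_struct Dmax m)
  : (2 ^ Dmax).-tuple R :=
  [tuple clip (leaf_value (node_records D s ((2 ^ Dmax).-1 + j))) | j < 2 ^ Dmax].

Definition laplace_pdf (mu b x : R) : R := (2 * b)^-1 * expR (- `|x - mu| / b).

(* law of a tuple of independent Laplace variables with means mus and
   common scale b, evaluated on a set A of tuples (iterated integral) *)
Fixpoint laplace_tuple (n : nat) : n.-tuple R -> set (n.-tuple R) -> \bar R :=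
  match n with
  | 0 => fun _ A => (\1_A [tuple] : R)%:E
  | n'.+1 => fun mus A =>
      (\int[lebesgue_measure]_x
         ((laplace_pdf (thead mus) (DeltaV / eps_leaf) x)%:E *
          laplace_tuple (behead_tuple mus) [set v | A (cons_tuple (x : R) v)]))%E
  end.

(* Pr[TrainSingleTree(D) \in O], the output being (tree structure, noisy
   leaf values) *)
Definition output_prob (D : seq (record d))
  (O : set (tree_struct Dmax m * (2 ^ Dmax).-tuple R)) : \bar R :=
  (\sum_(s : tree_struct Dmax m)
     (struct_prob D s)%:E * laplace_tuple (leaf_means D s) [set v | O (s, v)])%E.

End Algorithm.

(* measurable output sets: the structure component is finite and carries
   the discrete sigma-algebra, so a set of outputs is measurable (for the
   product sigma-algebra) iff each of its sections is measurable in R^(2^Dmax) *)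
Definition output_measurable (Dmax m : nat)
  (O : set (tree_struct Dmax m * (2 ^ Dmax).-tuple R)) : Prop :=
  forall s, measurable [set v | O (s, v)].

End TrainSingleTree.

From HB Require Import structures.
From mathcomp Require Import all_boot all_order all_algebra.
From mathcomp Require Import all_classical all_reals all_analysis.
From mathcomp Require Import ring lra zify.
Import Order.TTheory GRing.Theory Num.Theory.
Local Open Scope ring_scope.

(* Adding or removing a record r affects a run of the algorithm only at the
   nodes whose record set contains r.  Once the records with |g_i| > g_l^* are
   discarded, r follows a single root-to-leaf path, so it lies in at most Dmax
   internal nodes and in at most one leaf.  At an internal node the gain of
   every candidate split moves by at most DeltaG, so the exponential mechanism
   changes the probability of each choice by a factor at most exp(eps_nleaf),
   and the probability of the whole tree structure by at most
   exp(Dmax * eps_nleaf) = exp(eps_t / 2).  At the leaf, the clipped value V'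
   moves by at most DeltaV, and shifting the mean of Laplace noise of scale
   DeltaV / eps_leaf by DeltaV changes its density by a factor at most
   exp(eps_leaf) = exp(eps_t / 2). *)

Section NonnegIntegral.
Context {d} {T : measurableType d} {R : realType} (mu : {measure set T -> \bar R}).
Local Open Scope ereal_scope.
Import HBNNSimple.

(* The library's monotonicity and scaling lemmas assume measurability; for a
   nonnegative integrand the integral is the supremum of the integrals of its
   simple minorants, which yields both facts for arbitrary integrands. *)
Lemma ge0_le_integralT (f h : T -> \bar R) :
  (forall x, 0 <= f x) -> (forall x, f x <= h x) ->
  \int[mu]_x f x <= \int[mu]_x h x.
Proof.
move=> f0 fh; have h0 x : 0 <= h x by apply: le_trans (fh x).
rewrite !ge0_integralTE//; apply: ereal_sup_le => _ [u /= uf <-].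
by exists u => //= x; apply: le_trans (uf x) (fh x).
Qed.

Lemma ge0_integralZlT_le (k : R) (f : T -> \bar R) : (0 < k)%R ->
  (forall x, 0 <= f x) ->
  \int[mu]_x (k%:E * f x) <= k%:E * \int[mu]_x f x.
Proof.
move=> k0 f0; have kf0 x : 0 <= k%:E * f x by rewrite mule_ge0// lee_fin ltW.
rewrite !ge0_integralTE//; apply: ge_ereal_sup => _ [u /= uf <-].
have kV0 : (0 <= k^-1)%R by rewrite invr_ge0 ltW.
pose v := scale_nnsfun u kV0.
have -> : sintegral mu u = k%:E * sintegral mu v.
  rewrite [sintegral mu v]sintegralrM.
  by rewrite muleA -EFinM mulfV ?gt_eqF// mul1e.
rewrite lee_pmul2l ?lte_fin//; apply: ereal_sup_ubound; exists v => // x /=.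
by rewrite -(@lee_pmul2l _ k%:E) ?lte_fin// -EFinM mulrA mulfV ?gt_eqF// mul1r.
Qed.

End NonnegIntegral.

Section LaplaceDensity.
Context {R : realType}.

Lemma laplace_pdf_ge0 (mu b x : R) : 0 < b -> 0 <= laplace_pdf mu b x.
Proof. by move=> b0; rewrite mulr_ge0 ?invr_ge0 ?mulr_ge0 ?ltW ?expR_gt0. Qed.

Lemma laplace_pdf_shift (mu mu' b x : R) : 0 < b ->
  laplace_pdf mu b x <= expR (`|mu - mu'| / b) * laplace_pdf mu' b x.
Proof.
move=> b0; rewrite /laplace_pdf mulrCA ler_pM2l ?invr_gt0 ?mulr_gt0//.
rewrite -expRD ler_expR -mulrDl ler_pM2r ?invr_gt0//.
have := ler_distD mu x mu'; lra.
Qed.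

Context {t : nat} {lam eta gl eps : R}.
Local Notation b := (DeltaV t lam eta gl / eps_leaf eps).
Local Notation L := (laplace_tuple t lam eta gl eps).
Hypothesis b_gt0 : 0 < b.

Lemma laplace_tuple_ge0 n (mus : n.-tuple R) A : (0 <= L mus A)%E.
Proof.
elim: n mus A => [|n IH] mus A /=; first by rewrite lee_fin indicE; case: (_ \in _).
by apply: integral_ge0 => x _; rewrite mule_ge0// lee_fin laplace_pdf_ge0.
Qed.

Lemma laplace_tuple_shift n (mus mus' : n.-tuple R) A :
  (L mus A <= (expR ((\sum_(i < n) `|tnth mus i - tnth mus' i|) / b))%:E
              * L mus' A)%E.
Proof.
elim: n mus mus' A => [|n IH] mus mus' A /=.
  by rewrite big_ord0 mul0r expR0 mul1e.
rewrite big_ord_recl.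
under eq_bigr do rewrite !(tnth_nth 0) -!nth_behead -!(tnth_nth 0 (behead_tuple _)).
set a := `|_ - _|; set S := \sum_(i < n) _.
have pdf_L0 (nu : n.+1.-tuple R) x : (0 <= (laplace_pdf (thead nu) b x)%:E *
    L (behead_tuple nu) [set v | A (cons_tuple x v)])%E.
  by rewrite mule_ge0 ?lee_fin ?laplace_pdf_ge0 ?laplace_tuple_ge0.
apply: le_trans _ (ge0_integralZlT_le lebesgue_measure _ _ (expR_gt0 _) (pdf_L0 mus')).
apply: ge0_le_integralT => // x.
rewrite mulrDl expRD (EFinM (expR (a / b))) muleACA -EFinM; apply: lee_pmul.
- by rewrite lee_fin laplace_pdf_ge0.
- exact: laplace_tuple_ge0.
- by rewrite lee_fin laplace_pdf_shift.
- exact: IH.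
Qed.

End LaplaceDensity.

Section Clamp.
Context {R : realFieldType}.

Definition clamp (c x : R) : R := if x < - c then - c else if c < x then c else x.

Lemma clamp_lipschitz (c x y : R) : 0 <= c ->
  `|clamp c x - clamp c y| <= `|x - y|.
Proof.
move=> c0; have := ler_norm (x - y); have := ler_norm (y - x).
rewrite (distrC y x) /clamp => ? ?.
by case: (ltrP x (- c)) => ?; case: (ltrP c x) => ?;
  case: (ltrP y (- c)) => ?; case: (ltrP c y) => ?; rewrite ler_norml; apply/andP; split; lra.
Qed.

Lemma norm_clamp_le (c x : R) : 0 <= c -> `|clamp c x| <= c.
Proof.
by move=> c0; rewrite /clamp; case: (ltrP x (- c)) => ?; case: (ltrP c x) => ?;
  rewrite ler_norml; apply/andP; split; lra.
Qed.

Lemma dist_clamp_le (c x y : R) : 0 <= c ->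
  `|clamp c x - clamp c y| <= Num.min `|x - y| (2 * c).
Proof.
move=> c0; rewrite le_min clamp_lipschitz //=.
have := norm_clamp_le c x c0; have := norm_clamp_le c y c0.
have := ler_normB (clamp c x) (clamp c y); lra.
Qed.

End Clamp.

Lemma clipE (R : realType) (t : nat) (eta gl V : R) : 0 <= cap t eta gl ->
  clip t eta gl V = clamp (cap t eta gl) V.
Proof.
rewrite /clip /clamp; set c := cap t eta gl => c0.
have [->|V0] := eqVneq V 0; first by case: (ltrP 0 (- c)) => ?; case: (ltrP c 0) => ?; lra.
have nV0 : 0 < `|V| by rewrite normr_gt0.
have min_cap (W : R) : 0 < W -> c <= W -> Num.min 1 (c / W) = c / W.
  by move=> W0 cW; apply/min_idPr; rewrite ler_pdivrMr ?mul1r.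
case: (ltrP V (- c)) => h1; [|case: (ltrP c V) => h2].
- by rewrite ltr0_norm ?min_cap; [field | lra | lra | lra].
- by rewrite gtr0_norm ?min_cap; [field | lra | lra | lra].
- have -> : Num.min 1 (c / `|V|) = 1.
    by apply/min_idPl; rewrite ler_pdivlMr // mul1r ler_norml h1 h2.
  by rewrite mulr1.
Qed.

Section GainArithmetic.
Context {R : realFieldType}.

Lemma sqr_ratio_sensitivity (a s e c : R) : 0 < a -> `|s| <= a * c -> `|e| <= c ->
  `|(s + e) ^+ 2 / (a + 1) - s ^+ 2 / a| <= 3 * c ^+ 2.
Proof.
move=> a0 hs he; have c0 : 0 <= c by apply: le_trans he.
have aa0 : 0 < a * (a + 1) by rewrite mulr_gt0 //; lra.
have -> : (s + e) ^+ 2 / (a + 1) - s ^+ 2 / a =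
          (2 * s * e * a + e ^+ 2 * a - s ^+ 2) / (a * (a + 1)).
  by field; rewrite !gt_eqF //; lra.
rewrite normrM normfV (gtr0_norm aa0) ler_pdivrMr //.
have hsea : `|s * e * a| <= a * c * c * a.
  by rewrite !normrM (gtr0_norm a0) ler_pM2r // ler_pM.
have hs2 : s ^+ 2 <= (a * c) ^+ 2.
  by move: hs; rewrite ler_norml => /andP[? ?]; nra.
have he2 : e ^+ 2 * a <= c ^+ 2 * a.
  by rewrite ler_pM2r //; move: he; rewrite ler_norml => /andP[? ?]; nra.
have e2a0 : 0 <= e ^+ 2 * a by rewrite mulr_ge0 ?sqr_ge0 ?ltW.
have c2a0 : 0 <= c ^+ 2 * a by rewrite mulr_ge0 ?sqr_ge0 ?ltW.
move: hsea; rewrite !ler_norml => /andP[? ?]; apply/andP; split; nra.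
Qed.

Lemma ratio_sensitivity (n : nat) (lam s e c : R) : 0 < lam ->
  `|s| <= n%:R * c -> `|e| <= c ->
  `|(s + e) / (n.+1%:R + lam) - s / (n%:R + lam)| <= c / (1 + lam).
Proof.
move=> lam0 hs he; have c0 : 0 <= c by apply: le_trans he.
set a := n%:R + lam; have n0 : 0 <= n%:R :> R by [].
have a0 : 0 < a by rewrite /a; lra.
have nn : n%:R <= n%:R * n%:R :> R.
  by case: n {hs a a0 n0} => [|n]; rewrite ?mul0r // -natrM ler_nat leq_pmulr.
have -> : n.+1%:R + lam = a + 1 by rewrite -natr1 /a; ring.
have -> : (s + e) / (a + 1) - s / a = (e * a - s) / (a * (a + 1)).
  by field; rewrite !gt_eqF //; lra.
have aa0 : 0 < a * (a + 1) by rewrite mulr_gt0 //; lra.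
have num_le : `|e * a - s| <= c * (a + n%:R).
  apply: le_trans (ler_normB _ _) _; rewrite normrM (gtr0_norm a0).
  have : `|e| * a <= c * a by rewrite ler_pM2r.
  lra.
rewrite normrM normfV (gtr0_norm aa0) ler_pdivrMr // mulrAC ler_pdivlMr; last lra.
apply: le_trans (ler_wpM2r _ num_le) _; first lra.
rewrite /a; nra.
Qed.

End GainArithmetic.

Section ExponentialMechanism.
Context {R : realType} {I : finType}.

Lemma sum_expR_gt0 (f : I -> R) (j : I) : 0 < \sum_k expR (f k).
Proof.
rewrite (bigD1 j) //=; apply: lt_le_trans (expR_gt0 (f j)) _.
by rewrite lerDl sumr_ge0 // => k _; rewrite ltW ?expR_gt0.
Qed.

Lemma softmax_shift (f f' : I -> R) (c : R) (j : I) :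
  (forall k, `|f k - f' k| <= c) ->
  expR (f j) / \sum_k expR (f k)
    <= expR (2 * c) * (expR (f' j) / \sum_k expR (f' k)).
Proof.
move=> ff'.
have shift (h h' : I -> R) k : (forall k, `|h k - h' k| <= c) ->
    expR (h k) <= expR c * expR (h' k).
  by move=> /(_ k); rewrite -expRD ler_expR ler_norml; lra.
have S0 := sum_expR_gt0 f j; have S'0 := sum_expR_gt0 f' j.
have hS : \sum_k expR (f' k) <= expR c * \sum_k expR (f k).
  rewrite mulr_sumr; apply: ler_sum => k _; apply: shift => i.
  by rewrite distrC.
rewrite mulrA ler_pdivrMr // mulrAC ler_pdivlMr //.
have -> : expR (2 * c) = expR c * expR c by rewrite -expRD mulr2n mulrDl mul1r.
apply: le_trans (ler_pM (ltW (expR_gt0 _)) (ltW S'0) (shift _ _ j ff') hS) _.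
by rewrite mulrACA -!mulrA.
Qed.

End ExponentialMechanism.

Section Sensitivity.
Context {R : realType} {d m : nat} (spl : 'I_m -> 'I_d * R).
Variables (g : 'rV[R]_d -> R -> R) (lam gl : R).
Hypothesis lam_gt0 : 0 < lam.
Local Notation clipped r := (`|grad g r| <= gl).

Lemma norm_sum_grad_le (I : seq (record R d)) :
  {in I, forall r, clipped r} -> `|sum_grad g I| <= (size I)%:R * gl.
Proof.
elim: I => [|r I IH] hI; first by rewrite /sum_grad big_nil normr0 mul0r.
rewrite /sum_grad big_cons -natr1 mulrDl mul1r addrC.
apply: le_trans (ler_normD _ _) _; apply: lerD; last exact/hI/mem_head.
by apply: IH => x Ix; apply/hI; rewrite inE Ix orbT.
Qed.

Lemma sum_grad_perm {I J : seq (record R d)} :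
  perm_eq I J -> sum_grad g I = sum_grad g J.
Proof. exact: perm_big. Qed.

Lemma split_gain_perm j (I J : seq (record R d)) :
  perm_eq I J -> split_gain spl g lam I j = split_gain spl g lam J j.
Proof.
move=> IJ; rewrite /split_gain /gain.
have pL := perm_filter (fun r => goes_left (spl j) r.1) IJ.
have pR := perm_filter (fun r => ~~ goes_left (spl j) r.1) IJ.
by rewrite (sum_grad_perm pL) (sum_grad_perm pR) (perm_size pL) (perm_size pR).
Qed.

Lemma leaf_value_perm (I J : seq (record R d)) :
  perm_eq I J -> leaf_value g lam I = leaf_value g lam J.
Proof. by move=> IJ; rewrite /leaf_value (sum_grad_perm IJ) (perm_size IJ). Qed.

Lemma split_gain_cons j (I : seq (record R d)) r :
  {in I, forall x, clipped x} -> clipped r ->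
  `|split_gain spl g lam (r :: I) j - split_gain spl g lam I j| <= DeltaG gl.
Proof.
move=> hI hr; rewrite /split_gain /gain /=.
have step (J : seq (record R d)) : {in J, forall x, clipped x} ->
    `|(sum_grad g (r :: J)) ^+ 2 / ((size (r :: J))%:R + lam)
      - (sum_grad g J) ^+ 2 / ((size J)%:R + lam)| <= DeltaG gl.
  move=> hJ; rewrite /sum_grad big_cons /= -natr1 (addrAC _ 1 lam) (addrC (grad g r)).
  apply: sqr_ratio_sensitivity => //; first by rewrite ltr_wpDl.
  apply: le_trans (norm_sum_grad_le J hJ) _.
  apply: ler_wpM2r; first exact: le_trans (normr_ge0 _) hr.
  by rewrite lerDl ltW.
have hIP (P : pred (record R d)) : {in [seq x <- I | P x], forall x, clipped x}.
  by move=> x; rewrite mem_filter => /andP[_ /hI].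
by case: ifP => _ /=; rewrite opprD addrACA subrr ?addr0 ?add0r; apply/step/hIP.
Qed.

Lemma leaf_value_cons (I : seq (record R d)) r :
  {in I, forall x, clipped x} -> clipped r ->
  `|leaf_value g lam (r :: I) - leaf_value g lam I| <= gl / (1 + lam).
Proof.
move=> hI hr; rewrite /leaf_value !mulNr -opprD normrN.
rewrite /sum_grad big_cons (addrC (grad g r)) /=.
by apply: ratio_sensitivity => //; apply: norm_sum_grad_le.
Qed.

End Sensitivity.

Section TreePaths.
Context {R : realType} {d m Dmax : nat} (spl : 'I_m -> 'I_d * R).
Variables (s : tree_struct Dmax m) (x : 'rV[R]_d).

Fixpoint path_node (k : nat) : nat :=
  if k is k'.+1 then
    let p := path_node k' in if goes_left_at spl s p x then p.*2.+1 else p.*2.+2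
  else 0.

Lemma reach_fuel_enough f1 f2 i : (i <= f1)%N -> (i <= f2)%N ->
  reach_fuel spl s f1 x i = reach_fuel spl s f2 x i.
Proof.
elim: f1 f2 i => [|f1 IH] [|f2] i //=; rewrite ?leqn0.
- by move=> /eqP ->.
- by move=> _ /eqP ->.
by case: i => //= i hi1 hi2; congr (_ && _); apply: IH; rewrite leq_half_double; lia.
Qed.

Lemma reach_path_node i : reach spl s x i -> exists k, i = path_node k.
Proof.
elim/ltn_ind: i => -[_|i IH]; first by exists 0%N.
rewrite /reach /= => /andP[reach_parent /eqP side].
have lt_parent : (i./2 < i.+1)%N by rewrite ltnS leq_half_double; lia.
have [k ek] : exists k, i./2 = path_node k.
  by apply: (IH _ lt_parent); rewrite /reach (reach_fuel_enough _ i) // leq_half_double; lia.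
exists k.+1; rewrite /= -ek side; have := odd_double_half i.
by case: (odd i) => /=; lia.
Qed.

Lemma path_node_depth k : (2 ^ k <= (path_node k).+1 < 2 ^ k.+1)%N.
Proof. by elim: k => [|k IH] //=; rewrite !expnS in IH *; case: ifP; lia. Qed.

Lemma depth_uniq k k' v : (2 ^ k <= v.+1 < 2 ^ k.+1)%N ->
  (2 ^ k' <= v.+1 < 2 ^ k'.+1)%N -> k = k'.
Proof.
move=> /andP[h1 h2] /andP[h3 h4].
have : (k < k'.+1)%N by rewrite -(ltn_exp2l _ _ (isT : 1 < 2)%N); lia.
have : (k' < k.+1)%N by rewrite -(ltn_exp2l _ _ (isT : 1 < 2)%N); lia.
lia.
Qed.

Lemma card_reach_internal : (0 < Dmax)%N ->
  (#|[pred i : 'I_(2 ^ Dmax).-1 | reach spl s x i]| <= Dmax)%N.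
Proof.
move=> Dmax_gt0.
have N_gt0 : (0 < (2 ^ Dmax).-1)%N.
  have : (2 ^ 1 <= 2 ^ Dmax)%N by rewrite leq_exp2l.
  by rewrite expn1; lia.
pose node (k : 'I_Dmax) : 'I_(2 ^ Dmax).-1 := insubd (Ordinal N_gt0) (path_node k).
apply: leq_trans (_ : #|[set node k | k in 'I_Dmax]| <= Dmax)%N; last first.
  by apply: leq_trans (leq_imset_card _ _) _; rewrite card_ord.
apply/subset_leq_card/fintype.subsetP => i; rewrite inE => /reach_path_node [k ik].
have k_lt : (k < Dmax)%N.
  rewrite -(ltn_exp2l _ _ (isT : 1 < 2)%N).
  have := path_node_depth k; have := ltn_ord i; rewrite -ik; lia.
apply/imsetP; exists (Ordinal k_lt) => //; apply: val_inj.
by rewrite /node val_insubd /= -ik ltn_ord.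
Qed.

Lemma card_reach_leaf :
  (#|[pred j : 'I_(2 ^ Dmax) | reach spl s x ((2 ^ Dmax).-1 + j)]| <= 1)%N.
Proof.
have leafE (j : 'I_(2 ^ Dmax)) : reach spl s x ((2 ^ Dmax).-1 + j) ->
    nat_of_ord j = (path_node Dmax - (2 ^ Dmax).-1)%N.
  move=> /reach_path_node [k ejk].
  have leaf_depth : (2 ^ Dmax <= ((2 ^ Dmax).-1 + j).+1 < 2 ^ Dmax.+1)%N.
    have := ltn_ord j; have := expn_gt0 2 Dmax; rewrite expnS; lia.
  rewrite ejk in leaf_depth.
  have ek := depth_uniq _ _ _ (path_node_depth k) leaf_depth.
  by subst k; rewrite -ejk; lia.
apply/card_le1P => j1 hj1 j2; rewrite !inE in hj1 *.
apply/idP/idP => [hj2|/eqP -> //].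
by apply/eqP/val_inj; rewrite /= (leafE _ hj1) (leafE _ hj2).
Qed.

End TreePaths.

Definition differ_by {R : realType} {d : nat} (r : record R d)
    (A B : seq (record R d)) : Prop :=
  perm_eq B (r :: A) \/ perm_eq A (r :: B).

Section Privacy.
Variables (R : realType) (d m Dmax t : nat) (spl : 'I_m -> 'I_d * R).
Variables (g : 'rV[R]_d -> R -> R) (lam eta gl eps : R).
Hypotheses (lam_gt0 : 0 < lam) (eta_lt1 : eta < 1) (gl_gt0 : 0 < gl).
Hypotheses (Dmax_gt0 : (0 < Dmax)%N) (eps_gt0 : 0 < eps).

Local Notation NR := (node_records spl g gl).
Local Notation SG := (split_gain spl g lam).
Local Notation CP := (choose_prob Dmax spl g lam gl eps).
Local Notation LM := (leaf_means t spl g lam eta gl).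
Local Notation L := (laplace_tuple t lam eta gl eps).
Local Notation en := (eps_nleaf Dmax eps).

Definition visits (s : tree_struct Dmax m) (r : record R d) (i : nat) : bool :=
  (`|grad g r| <= gl) && reach spl s r.1 i.

Lemma node_records_cons D r s i :
  NR (r :: D) s i = if visits s r i then r :: NR D s i else NR D s i.
Proof.
rewrite /node_records /clipped_data /visits /=.
by case: (`|grad g r| <= gl) => //=; case: (reach _ _ _ _).
Qed.

Lemma node_records_sensitivity (F : seq (record R d) -> R) c r A B s i :
  (forall I J, perm_eq I J -> F I = F J) ->
  (forall I, {in I, forall x, `|grad g x| <= gl} -> `|grad g r| <= gl ->
     `|F (r :: I) - F I| <= c) ->
  differ_by r A B ->
  `|F (NR A s i) - F (NR B s i)| <= (if visits s r i then c else 0).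
Proof.
move=> Fperm Fcons.
have NR_clipped D : {in NR D s i, forall x, `|grad g x| <= gl}.
  by move=> x; rewrite /node_records /clipped_data !mem_filter => /and3P[_ ->].
have NR_perm D D' : perm_eq D' (r :: D) ->
    F (NR D' s i) = F (if visits s r i then r :: NR D s i else NR D s i).
  by move=> DD'; rewrite -node_records_cons; apply: Fperm; do 2!apply: perm_filter.
case=> DD'; rewrite (NR_perm _ _ DD'); first rewrite distrC;
  by case: ifP => [/andP[hr _]|_]; [exact: Fcons (NR_clipped _) hr | rewrite subrr normr0].
Qed.

Lemma DeltaG_gt0 : 0 < DeltaG gl.
Proof. by rewrite mulr_gt0 ?exprn_gt0. Qed.

Lemma choose_prob_le I J j c : (forall k, `|SG I k - SG J k| <= c) ->
  CP I j <= expR (en * c / DeltaG gl) * CP J j.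
Proof.
move=> IJ; set K := en / (2 * DeltaG gl).
have K0 : 0 <= K.
  by rewrite /K /eps_nleaf !divr_ge0 ?mulr_ge0 ?ler0n ?ltW ?DeltaG_gt0.
have -> : en * c / DeltaG gl = 2 * (K * c).
  by rewrite /K; field; rewrite gt_eqF ?DeltaG_gt0.
apply: (softmax_shift (fun k => en * SG I k / (2 * DeltaG gl))
                      (fun k => en * SG J k / (2 * DeltaG gl))) => k.
have -> : en * SG I k / (2 * DeltaG gl) - en * SG J k / (2 * DeltaG gl)
          = K * (SG I k - SG J k) by rewrite /K; field; rewrite gt_eqF ?DeltaG_gt0.
by rewrite normrM ger0_norm // ler_wpM2l.
Qed.

Lemma choose_prob_ge0 I j : 0 <= CP I j.
Proof. by rewrite divr_ge0 ?sumr_ge0 // => *; rewrite ltW ?expR_gt0. Qed.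

Lemma choose_prob_node_le r A B s (i : 'I_(2 ^ Dmax).-1) : differ_by r A B ->
  CP (NR A s i) (s i)
    <= expR (if visits s r i then en else 0) * CP (NR B s i) (s i).
Proof.
move=> rAB.
apply: le_trans (choose_prob_le _ _ _ (if visits s r i then DeltaG gl else 0) _) _.
  move=> k; apply: (node_records_sensitivity (SG^~ k)) rAB.
  - by move=> I J; apply: split_gain_perm.
  - by move=> I; apply: split_gain_cons.
by case: ifP; rewrite ?mulr0 ?mul0r // mulfK // gt_eqF ?DeltaG_gt0.
Qed.

Lemma struct_prob_ge0 D (s : tree_struct Dmax m) : 0 <= struct_prob spl g lam gl eps D s.
Proof. by apply: prodr_ge0 => i _; apply: choose_prob_ge0. Qed.

Lemma struct_prob_le r A B (s : tree_struct Dmax m) : differ_by r A B ->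
  struct_prob spl g lam gl eps A s <= expR (eps / 2) * struct_prob spl g lam gl eps B s.
Proof.
move=> rAB; rewrite /struct_prob.
apply: le_trans (_ : _ <= \prod_(i : 'I_(2 ^ Dmax).-1)
    (expR (if visits s r i then en else 0) * CP (NR B s i) (s i))) _.
  by apply: ler_prod => i _; rewrite choose_prob_ge0 choose_prob_node_le.
rewrite big_split /= -expR_sum; apply: ler_wpM2r; first exact: struct_prob_ge0.
rewrite ler_expR -big_mkcond /= sumr_const.
have card_visits : (#|[pred i : 'I_(2 ^ Dmax).-1 | visits s r i]| <= Dmax)%N.
  apply: leq_trans (card_reach_internal spl s r.1 Dmax_gt0).
  by apply/subset_leq_card/fintype.subsetP => i; rewrite !inE => /andP[].
apply: le_trans (ler_wpMn2l _ card_visits) _.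
  by rewrite /eps_nleaf divr_ge0 ?mulr_ge0 ?ler0n ?ltW.
suff -> : en *+ Dmax = eps / 2 by [].
by rewrite -[_ *+ Dmax]mulr_natr /eps_nleaf; field; rewrite pnatr_eq0 -lt0n.
Qed.

Lemma cap_ge0 : 0 <= cap t eta gl.
Proof. by rewrite mulr_ge0 ?exprn_ge0 ?ltW // subr_gt0. Qed.

Lemma DeltaV_gt0 : 0 < DeltaV t lam eta gl.
Proof.
rewrite lt_min divr_gt0 ?addr_gt0 //= -mulrA mulr_gt0 // mulr_gt0 //.
by rewrite exprn_gt0 // subr_gt0.
Qed.

Lemma leaf_means_dist_le r A B (s : tree_struct Dmax m) : differ_by r A B ->
  \sum_(j < 2 ^ Dmax) `|tnth (LM A s) j - tnth (LM B s) j| <= DeltaV t lam eta gl.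
Proof.
move=> rAB; under eq_bigr do rewrite !tnth_mktuple !clipE ?cap_ge0 //.
set leaf := fun j : 'I_(2 ^ Dmax) => ((2 ^ Dmax).-1 + j)%N.
apply: le_trans (_ : _ <= \sum_(j < 2 ^ Dmax)
    if visits s r (leaf j) then DeltaV t lam eta gl else 0) _.
  apply: ler_sum => j _; apply: le_trans (dist_clamp_le _ _ _ cap_ge0) _.
  have := node_records_sensitivity (leaf_value g lam) _ r A B s (leaf j)
    (leaf_value_perm g lam) (fun I => leaf_value_cons g lam gl lam_gt0 I r) rAB.
  case: ifP => _ hV; first by rewrite /DeltaV /cap mulrA; apply: le_min2.
  by rewrite ge_min hV.
rewrite -big_mkcond /= sumr_const.
have : (#|[pred j : 'I_(2 ^ Dmax) | visits s r (leaf j)]| <= 1)%N.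
  apply: leq_trans (card_reach_leaf spl s r.1).
  by apply/subset_leq_card/fintype.subsetP => j; rewrite !inE => /andP[].
by case: #|_| => [|[|]] //= _; rewrite ltW ?DeltaV_gt0.
Qed.

Lemma laplace_scale_gt0 : 0 < DeltaV t lam eta gl / eps_leaf eps.
Proof. by rewrite divr_gt0 ?DeltaV_gt0 ?divr_gt0. Qed.

Lemma laplace_leaf_means_le r A B (s : tree_struct Dmax m) S : differ_by r A B ->
  (L (LM A s) S <= (expR (eps / 2))%:E * L (LM B s) S)%E.
Proof.
move=> rAB; apply: le_trans (laplace_tuple_shift laplace_scale_gt0 _ _ _ _) _.
apply: lee_wpmul2r; first exact: laplace_tuple_ge0 laplace_scale_gt0 _ _ _.
rewrite lee_fin ler_expR ler_pdivrMr ?laplace_scale_gt0 //.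
apply: le_trans (leaf_means_dist_le _ _ _ s rAB) _.
by rewrite /eps_leaf mulrC divfK // gt_eqF // divr_gt0.
Qed.

Lemma output_prob_le r A B (O : set (tree_struct Dmax m * (2 ^ Dmax).-tuple R)) :
  differ_by r A B ->
  (output_prob t spl g lam eta gl eps A O
     <= (expR eps)%:E * output_prob t spl g lam eta gl eps B O)%E.
Proof.
move=> rAB; rewrite /output_prob ge0_sume_distrr => [|s _]; last first.
  by rewrite mule_ge0 ?laplace_tuple_ge0 ?laplace_scale_gt0 ?lee_fin ?struct_prob_ge0.
apply: lee_sum => s _.
have -> : expR eps = expR (eps / 2) * expR (eps / 2) by rewrite -expRD -splitr.
rewrite (EFinM (expR (eps / 2))) muleACA -EFinM.
apply: lee_pmul; last exact: laplace_leaf_means_le rAB.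
- by rewrite lee_fin struct_prob_ge0.
- exact: laplace_tuple_ge0 laplace_scale_gt0 _ _ _.
- by rewrite lee_fin; apply: struct_prob_le rAB.
Qed.

End Privacy.

Theorem theorem7 (R : realType) (d m : nat) (spl : 'I_m -> 'I_d * R)
  (g : 'rV[R]_d -> R -> R) (lam eta gl eps : R) (t Dmax : nat) :
  0 < lam -> 0 < eta < 1 -> 0 < gl -> (1 <= t)%N -> (1 <= Dmax)%N -> 0 < eps ->
  (0 < m)%N -> injective spl ->
  forall D D' : seq (record R d),
    (forall r, r \in D -> -1 <= r.2 <= 1) ->
    (forall r, r \in D' -> -1 <= r.2 <= 1) ->
    neighboring D D' ->
  forall O : set (tree_struct Dmax m * (2 ^ Dmax).-tuple R),
    @output_measurable R Dmax m O ->
    (@output_prob R d m Dmax t spl g lam eta gl eps D O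
       <= (expR eps)%:E * @output_prob R d m Dmax t spl g lam eta gl eps D' O)%E.
Proof.
move=> lam_gt0 /andP[_ eta_lt1] gl_gt0 _ Dmax_gt0 eps_gt0 _ _ D D' _ _ DD' O _.
have [r rDD'] : exists r, differ_by r D D'.
  by case: DD' => -[r p]; exists r; [left | right].
by apply: output_prob_le rDD'.
Qed.
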